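(* Let $p,q$ be two distinct prime numbers and $l$ a positive odd integer. Then $\dfrac{-1}{p}\in\mathbb{Q}\text{-}\mathcal{KS}(q^{l})$ if and only if $\dfrac{-1}{q}\in\mathbb{Q}\text{-}\mathcal{KS}(p^{l})$.
   Context: Every nonzero rational $\alpha$ is written $\alpha=\alpha_1/\alpha_2$ with $\alpha_1\in\mathbb{Z}$, $\alpha_2$ a positive integer and $\gcd(\alpha_1,\alpha_2)=1$. For an integer $N\ge 2$ and a nonzero rational $\alpha=\alpha_1/\alpha_2$, $N$ is called an $\alpha$-Korselt number if $N\neq\alpha$ and $\alpha_2r-\alpha_1$ divides $\alpha_2N-\alpha_1$ (in $\mathbb{Z}$) for every prime divisor $r$ of $N$. $\mathbb{Q}\text{-}\mathcal{KS}(N)$ is the set of all $\beta\in\mathbb{Q}\setminus\{0,N\}$ such that $N$ is a $\beta$-Korselt number. *)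

From mathcomp Require Import all_boot all_order all_algebra.
Set Implicit Arguments. Unset Strict Implicit. Unset Printing Implicit Defensive.
Import Order.TTheory GRing.Theory Num.Theory.
Local Open Scope ring_scope.

Definition korselt (alpha : rat) (N : nat) : Prop :=
  (2 <= N)%N /\ alpha != 0 /\ alpha != (N%:R : rat) /\
  forall r : nat, prime r -> (r %| N)%N ->
    (denq alpha * r%:Z - numq alpha %| denq alpha * N%:Z - numq alpha)%Z.

Definition QKS (N : nat) (beta : rat) : Prop :=
  beta != 0 /\ beta != (N%:R : rat) /\ korselt beta N.

From mathcomp Require Import all_boot all_order all_algebra.
From mathcomp Require Import ring.
Import Order.TTheory GRing.Theory Num.Theory.
Local Open Scope ring_scope.

(* Since [-1/p] has numerator [-1] and denominator [p], and [q] is the only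
   prime divisor of [q^l], the statement [-1/p \in Q-KS(q^l)] amounts to
   [p q + 1 | p q^l + 1].  Modulo [d = p q + 1] we have [p q = -1], hence
   [(p q)^l = -1] for odd [l], and multiplying [p q^l = -1] by [p^(l-1)] gives
   [p^(l-1) = 1]; then [q p^l = (p q) p^(l-1) = -1] as well.  The roles of [p]
   and [q] being symmetric, the equivalence follows. *)

Lemma dvdz_add1_exp_odd (x : int) n : odd n -> (x + 1 %| x ^+ n + 1)%Z.
Proof.
move=> n_odd.
have -> : x ^+ n + 1 = x ^+ n - (-1) ^+ n by rewrite -signr_odd n_odd opprK.
by rewrite subrXX opprK dvdz_mulr.
Qed.

Lemma dvdz_mul_exp_swap (a b : int) l : odd l ->
  (a * b + 1 %| a * b ^+ l + 1)%Z -> (b * a + 1 %| b * a ^+ l + 1)%Z.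
Proof.
rewrite [b * a]mulrC; case: l => // k k1_odd d_abk; set d := a * b + 1 in d_abk *.
have d_ak : (d %| a ^+ k - 1)%Z.
  have -> : a ^+ k - 1 = a ^+ k * (a * b ^+ k.+1 + 1) - ((a * b) ^+ k.+1 + 1).
    by rewrite exprMn !exprS; ring.
  by rewrite rpredB ?dvdz_mull ?dvdz_add1_exp_odd.
have -> : b * a ^+ k.+1 + 1 = a * b * (a ^+ k - 1) + d by rewrite exprS /d; ring.
by rewrite rpredD ?dvdz_mull.
Qed.

Lemma numq_N1_div_nat n : (0 < n)%N -> numq (- 1 / n%:R : rat) = -1.
Proof.
move=> n_gt0; have -> : (- 1 / n%:R : rat) = (-1)%:~R / n%:Z%:~R by [].
by rewrite coprimeq_num ?coprime1n //; case: n n_gt0.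
Qed.

Lemma denq_N1_div_nat n : (0 < n)%N -> denq (- 1 / n%:R : rat) = n%:Z.
Proof.
move=> n_gt0; have -> : (- 1 / n%:R : rat) = (-1)%:~R / n%:Z%:~R by [].
by rewrite coprimeq_den ?coprime1n //; case: n n_gt0.
Qed.

Lemma korselt_prime_exp (alpha : rat) q l : prime q -> (0 < l)%N ->
  korselt alpha (q ^ l) <->
  [/\ alpha != 0, alpha != (q ^ l)%N%:R &
      (denq alpha * q%:Z - numq alpha %| denq alpha * q%:Z ^+ l - numq alpha)%Z].
Proof.
move=> q_pr l_gt0; rewrite /korselt.
have -> : (q ^ l)%N%:Z = q%:Z ^+ l by rewrite -[LHS]natz natrX natz.
have q_dvd_ql : (q %| q ^ l)%N by rewrite Euclid_dvdX ?dvdnn.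
split=> [[_ [alpha0 [alphaN /(_ q q_pr q_dvd_ql)]]] | [alpha0 alphaN dvd_q]] //.
split.
  by apply: leq_trans (prime_gt1 q_pr) _; rewrite -{1}(expn1 q) leq_exp2l ?prime_gt1.
do 2!split=> //; move=> r r_pr.
by rewrite Euclid_dvdX // l_gt0 andbT dvdn_prime2 // => /eqP ->.
Qed.

Lemma QKS_prime_exp_N1_div p q l : (0 < p)%N -> prime q -> (0 < l)%N ->
  QKS (q ^ l) (- 1 / p%:R) <-> (p%:Z * q%:Z + 1 %| p%:Z * q%:Z ^+ l + 1)%Z.
Proof.
move=> p_gt0 q_pr l_gt0.
have alpha_lt0 : (- 1 / p%:R : rat) < 0 by rewrite mulN1r oppr_lt0 invr_gt0 ltr0n.
have alpha0 : (- 1 / p%:R : rat) != 0 by rewrite ltr0_neq0.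
have alphaN : (- 1 / p%:R : rat) != (q ^ l)%N%:R.
  by apply: contraTneq alpha_lt0 => ->; rewrite ltNge ler0n.
rewrite /QKS korselt_prime_exp // numq_N1_div_nat // denq_N1_div_nat // !opprK.
by split=> [[_ [_ []]] | ?].
Qed.

Theorem proposition5p4 (p q l : nat) :
  prime p -> prime q -> p <> q -> odd l -> (0 < l)%N ->
  (QKS (q ^ l)%N (- 1 / p%:R) <-> QKS (p ^ l)%N (- 1 / q%:R)).
Proof.
move=> p_pr q_pr _ l_odd l_gt0.
rewrite !QKS_prime_exp_N1_div // ?prime_gt0 //.
by split; apply: dvdz_mul_exp_swap.
Qed.
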